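(* Let $\mathbb A$ be a graph of groups and let $\mathcal B$ be a folded $\mathbb A$-graph with associated graph of groups $\mathbb B$. If $p$ is a reduced $\mathbb B$-path, then the $\mathbb A$-path $\mu(p)$ is $\mathbb A$-reduced.
   Context: Graphs are in Serre's sense. A graph of groups $\mathbb A$ has vertex groups $A_v$, edge groups $A_e=A_{e^{-1}}$, monomorphisms $\alpha_e:A_e\to A_{o(e)}$, $\omega_e:A_e\to A_{t(e)}$ with $\alpha_{e^{-1}}=\omega_e$. An $\mathbb A$-path is a sequence $a_0,e_1,a_1,\dots,e_k,a_k$ with $e_1,\dots,e_k$ an edge path and $a_0\in A_{o(e_1)}$, $a_i\in A_{t(e_i)}$; it is $\mathbb A$-reduced if it contains no subsequence $e,\omega_e(c),e^{-1}$ with $c\in A_e$. An $\mathbb A$-graph $\mathcal B$ is a graph $B$ with a graph morphism $[\cdot]:B\to A$, subgroups $B_u\le A_{[u]}$ ($u\in VB$) and elements $f_\alpha\in A_{[o(f)]}$, $f_\omega\in A_{[t(f)]}$ ($f\in EB$) with $(f^{-1})_\alpha=(f_\omega)^{-1}$. Its graph of groups $\mathbb B$ has graph $B$, vertex groups $B_u$, edge groups $B_f=\alpha_{[f]}^{-1}(f_\alpha^{-1}B_{o(f)}f_\alpha)\cap\omega_{[f]}^{-1}(f_\omega B_{t(f)}f_\omega^{-1})$ and $\alpha_f(g)=f_\alpha\alpha_{[f]}(g)f_\alpha^{-1}$ (so $\omega_f(g)=f_\omega^{-1}\omega_{[f]}(g)f_\omega$). A $\mathbb B$-path $b_0,f_1,b_1,\dots,f_s,b_s$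 is defined analogously with $b_i$ in the groups $B_u$, and is reduced if it contains no subsequence $f,\omega_f(c),f^{-1}$ with $c\in B_f$. For such a path, $\mu(p)=(b_0(f_1)_\alpha),[f_1],((f_1)_\omega b_1(f_2)_\alpha),\dots,[f_s],((f_s)_\omega b_s)$. $\mathcal B$ is folded if neither of the following holds: (1) there are distinct edges $f_1,f_2$ with $o(f_1)=o(f_2)=z$, $[f_1]=[f_2]=e$, and $(f_2)_\alpha=a'(f_1)_\alpha\alpha_e(c)$ for some $c\in A_e$, $a'\in B_z$; (2) there is an edge $f$ with $[f]=e$ such that $\alpha_e^{-1}(f_\alpha^{-1}B_{o(f)}f_\alpha)\neq\omega_e^{-1}(f_\omega B_{t(f)}f_\omega^{-1})$. *)

From Stdlib Require Import List.
Import ListNotations.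
Set Implicit Arguments.
Unset Strict Implicit.

(* Groups.  All groups of a graph of groups are represented with      *)
(* elements drawn from one common (arbitrary) type T: a group is a    *)
(* subset [gmem] of T together with its own operations, satisfying    *)
(* the group axioms on that subset.  Every family of groups can be    *)
(* represented this way (take T = disjoint union of the carriers).    *)
Record pgroup (T : Type) := PGroup {
  gmem : T -> Prop;
  gmul : T -> T -> T;
  gone : T;
  ginv : T -> T;
  gmem_one : gmem gone;
  gmem_mul : forall x y, gmem x -> gmem y -> gmem (gmul x y);
  gmem_inv : forall x, gmem x -> gmem (ginv x);
  gmulA : forall x y z, gmem x -> gmem y -> gmem z ->
            gmul x (gmul y z) = gmul (gmul x y) z;
  gmul1l : forall x, gmem x -> gmul gone x = x;
  gmul1r : forall x, gmem x -> gmul x gone = x;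
  gmulVl : forall x, gmem x -> gmul (ginv x) x = gone;
  gmulVr : forall x, gmem x -> gmul x (ginv x) = gone
}.

Definition is_subgroup (T : Type) (G : pgroup T) (H : T -> Prop) : Prop :=
  (forall x, H x -> gmem G x) /\ H (gone G) /\
  (forall x y, H x -> H y -> H (gmul G x y)) /\
  (forall x, H x -> H (ginv G x)).

Definition is_mono (T : Type) (G H : pgroup T) (f : T -> T) : Prop :=
  (forall x, gmem G x -> gmem H (f x)) /\
  (forall x y, gmem G x -> gmem G y -> f (gmul G x y) = gmul H (f x) (f y)) /\
  (forall x y, gmem G x -> gmem G y -> f x = f y -> x = y).

Record sgraph := SGraph {
  vert : Type;
  edge : Type;
  einv : edge -> edge;
  eorig : edge -> vert;
  einvK : forall e, einv (einv e) = e;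
  einv_neq : forall e, einv e <> e
}.

Definition eterm (G : sgraph) (e : edge G) : vert G := eorig (einv e).

(* Graphs of groups.  Data: vertex groups A_v, edge groups A_e with    *)
(* A_{e^-1} = A_e, monomorphisms alpha_e : A_e -> A_{o(e)}.  The map  *)
(* omega_e : A_e -> A_{t(e)} is *defined* as alpha_{e^-1}, which is   *)
(* exactly the requirement alpha_{e^-1} = omega_e.                    *)
Record graph_of_groups (T : Type) := GoG {
  ggraph : sgraph;
  vgrp : vert ggraph -> pgroup T;
  egrp : edge ggraph -> pgroup T;
  alpha : edge ggraph -> T -> T;
  egrp_inv : forall e, egrp (einv e) = egrp e;
  alpha_mono : forall e, is_mono (egrp e) (vgrp (eorig e)) (alpha e)
}.

Arguments vgrp {T} g _ : rename.
Arguments egrp {T} g _ : rename.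
Arguments alpha {T} g _ _ : rename.

Definition omega (T : Type) (A : graph_of_groups T) (e : edge (ggraph A)) : T -> T :=
  alpha A (einv e).
Arguments omega {T} A _ _.

(* A path a_0, e_1, a_1, ..., e_k, a_k is encoded by its starting     *)
(* vertex v, the element a_0 and the list [(e_1,a_1);...;(e_k,a_k)].  *)
Section GenericPaths.
Variables (V E T : Type) (inv : E -> E) (o : E -> V)
          (vmem : V -> T -> Prop) (emem : E -> T -> Prop) (om : E -> T -> T).

Fixpoint path_from (v : V) (s : list (E * T)) : Prop :=
  match s with
  | [] => True
  | (e, a) :: s' => o e = v /\ vmem (o (inv e)) a /\ path_from (o (inv e)) s'
  end.

Definition is_path (v : V) (a0 : T) (s : list (E * T)) : Prop :=
  vmem v a0 /\ path_from v s.

Fixpoint has_backtrack (s : list (E * T)) : Prop :=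
  match s with
  | (e, a) :: ((e', _) :: _) as s' =>
      (e' = inv e /\ exists c, emem e c /\ a = om e c) \/ has_backtrack s'
  | _ => False
  end.

Definition is_reduced_path (v : V) (a0 : T) (s : list (E * T)) : Prop :=
  is_path v a0 s /\ ~ has_backtrack s.
End GenericPaths.

Definition A_reduced (T : Type) (A : graph_of_groups T)
  (v : vert (ggraph A)) (a0 : T) (s : list (edge (ggraph A) * T)) : Prop :=
  is_reduced_path (@einv (ggraph A)) (@eorig (ggraph A))
    (fun v x => gmem (vgrp A v) x) (fun e x => gmem (egrp A e) x) (omega A) v a0 s.

(* A-graphs.  Data: a graph B, a graph morphism [.] : B -> A,          *)
(* subgroups B_u <= A_[u], elements f_alpha in A_[o(f)].  The element  *)
(* f_omega in A_[t(f)] is *defined* as ((f^-1)_alpha)^-1, which is    *)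
(* exactly the requirement (f^-1)_alpha = (f_omega)^-1.               *)
Record Agraph (T : Type) (A : graph_of_groups T) := AGraph {
  bgraph : sgraph;
  labv : vert bgraph -> vert (ggraph A);
  labe : edge bgraph -> edge (ggraph A);
  lab_orig : forall f, labv (eorig f) = eorig (labe f);
  lab_inv : forall f, labe (einv f) = einv (labe f);
  bvgrp : vert bgraph -> T -> Prop;
  bvgrp_sub : forall u, is_subgroup (vgrp A (labv u)) (bvgrp u);
  falpha : edge bgraph -> T;
  falpha_mem : forall f, gmem (vgrp A (labv (eorig f))) (falpha f)
}.

Arguments bgraph {T A} B : rename.
Arguments labv {T A} B _ : rename.
Arguments labe {T A} B _ : rename.
Arguments bvgrp {T A} B _ _ : rename.
Arguments falpha {T A} B _ : rename.

Section AgraphDefs.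
Variables (T : Type) (A : graph_of_groups T) (B : Agraph A).

Notation VB := (vert (bgraph B)).
Notation EB := (edge (bgraph B)).

Definition Agrp (u : VB) : pgroup T := vgrp A (labv B u).

Definition fomega (f : EB) : T :=
  ginv (Agrp (eterm f)) (falpha B (einv f)).

Definition in_conj_alpha (f : EB) (x : T) : Prop :=
  exists b, bvgrp B (eorig f) b /\
    x = gmul (Agrp (eorig f)) (ginv (Agrp (eorig f)) (falpha B f))
          (gmul (Agrp (eorig f)) b (falpha B f)).

Definition in_conj_omega (f : EB) (x : T) : Prop :=
  exists b, bvgrp B (eterm f) b /\
    x = gmul (Agrp (eterm f)) (fomega f)
          (gmul (Agrp (eterm f)) b (ginv (Agrp (eterm f)) (fomega f))).

(* edge group B_f of the graph of groups associated with B *)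
Definition begrp (f : EB) (c : T) : Prop :=
  gmem (egrp A (labe B f)) c /\
  in_conj_alpha f (alpha A (labe B f) c) /\
  in_conj_omega f (omega A (labe B f) c).

Definition bomega (f : EB) (g : T) : T :=
  gmul (Agrp (eterm f)) (ginv (Agrp (eterm f)) (fomega f))
    (gmul (Agrp (eterm f)) (omega A (labe B f) g) (fomega f)).

Definition B_reduced (u : VB) (b0 : T) (s : list (EB * T)) : Prop :=
  is_reduced_path (@einv (bgraph B)) (@eorig (bgraph B))
    (bvgrp B) begrp bomega u b0 s.

Definition fold_cond1 : Prop :=
  exists f1 f2 : EB, f1 <> f2 /\ eorig f1 = eorig f2 /\ labe B f1 = labe B f2 /\
    exists c a', gmem (egrp A (labe B f1)) c /\ bvgrp B (eorig f1) a' /\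
      falpha B f2 = gmul (Agrp (eorig f1)) a'
                      (gmul (Agrp (eorig f1)) (falpha B f1) (alpha A (labe B f1) c)).

Definition fold_cond2 : Prop :=
  exists f : EB,
    ~ (forall c,
         (gmem (egrp A (labe B f)) c /\ in_conj_alpha f (alpha A (labe B f) c)) <->
         (gmem (egrp A (labe B f)) c /\ in_conj_omega f (omega A (labe B f) c))).

Definition folded : Prop := ~ fold_cond1 /\ ~ fold_cond2.

Fixpoint mu_rest (s : list (EB * T)) : list (edge (ggraph A) * T) :=
  match s with
  | [] => []
  | (f, b) :: s' =>
      (labe B f,
       match s' with
       | [] => gmul (Agrp (eterm f)) (fomega f) b
       | (f', _) :: _ =>
           gmul (Agrp (eterm f)) (fomega f) (gmul (Agrp (eterm f)) b (falpha B f'))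
       end) :: mu_rest s'
  end.

Definition mu_head (u : VB) (b0 : T) (s : list (EB * T)) : T :=
  match s with
  | [] => b0
  | (f1, _) :: _ => gmul (Agrp u) b0 (falpha B f1)
  end.

End AgraphDefs.

Arguments folded {T A} B.
Arguments B_reduced {T A} B _ _ _.
Arguments mu_head {T A} B _ _ _.
Arguments mu_rest {T A} B _.
Arguments A_reduced {T} A _ _ _.

(* A backtrack e, omega_e(c), e^-1 of mu(p) can only occur at the junction of two
   consecutive edges f, g of p, where it reads f_omega b g_alpha = omega_e(c) with
   [g] = e^-1.  As f_omega = ((f^-1)_alpha)^-1, this says
   g_alpha = b^-1 (f^-1)_alpha alpha_{e^-1}(c), so folding condition (1) forces
   g = f^-1.  The same equation then shows omega_e(c) in f_omega B_{t(f)} f_omega^-1,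
   hence c in B_f by folding condition (2), and b = omega_f(c): p backtracks. *)
From Stdlib Require Import Classical.

Section GroupFacts.
Variables (T : Type) (G : pgroup T).

Lemma gmulKV x y : gmem G x -> gmem G y -> gmul G (ginv G x) (gmul G x y) = y.
Proof.
  intros Hx Hy. rewrite gmulA by auto using gmem_inv.
  rewrite gmulVl, gmul1l; auto.
Qed.

Lemma ginvK x : gmem G x -> ginv G (ginv G x) = x.
Proof.
  intros Hx. transitivity (gmul G (ginv G (ginv G x)) (gmul G (ginv G x) x)).
  - rewrite gmulVl, gmul1r; auto using gmem_inv.
  - apply gmulKV; auto using gmem_inv.
Qed.

Lemma gmul_eq_l x y z : gmem G x -> gmem G y -> gmul G x y = z -> y = gmul G (ginv G x) z.
Proof. intros Hx Hy <-. now rewrite gmulKV. Qed.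

Lemma gmul_eq_r x y z : gmem G x -> gmem G y -> gmul G x y = z -> x = gmul G z (ginv G y).
Proof.
  intros Hx Hy <-. rewrite <- gmulA by auto using gmem_inv.
  rewrite gmulVr, gmul1r; auto.
Qed.

End GroupFacts.

Section AgraphFacts.
Variables (T : Type) (A : graph_of_groups T) (B : Agraph A).

Implicit Types (f g : edge (bgraph B)) (u : vert (bgraph B)) (s : list (edge (bgraph B) * T)).

Lemma labv_eterm f : labv B (eterm f) = eterm (labe B f).
Proof. unfold eterm. now rewrite lab_orig, lab_inv. Qed.

Lemma bvgrp_mem u b : bvgrp B u b -> gmem (Agrp u) b.
Proof. apply (bvgrp_sub u). Qed.

Lemma falpha_mem_eterm f g : eorig g = eterm f -> gmem (Agrp (eterm f)) (falpha B g).
Proof. intros <-. apply falpha_mem. Qed.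

Lemma fomega_mem f : gmem (Agrp (eterm f)) (fomega f).
Proof. apply gmem_inv, (falpha_mem (einv f)). Qed.

Lemma ginv_fomega f : ginv (Agrp (eterm f)) (fomega f) = falpha B (einv f).
Proof. apply ginvK, (falpha_mem (einv f)). Qed.

Lemma omega_mem f c :
  gmem (egrp A (labe B f)) c -> gmem (Agrp (eterm f)) (omega A (labe B f) c).
Proof.
  intros Hc. unfold Agrp. rewrite labv_eterm.
  apply (alpha_mono (einv (labe B f))). now rewrite egrp_inv.
Qed.

Lemma not_fold_cond1_edge_eq f g a c :
  ~ fold_cond1 B -> eorig g = eorig f -> labe B g = labe B f ->
  gmem (egrp A (labe B f)) c -> bvgrp B (eorig f) a ->
  falpha B g = gmul (Agrp (eorig f)) a
                 (gmul (Agrp (eorig f)) (falpha B f) (alpha A (labe B f) c)) ->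
  g = f.
Proof.
  intros NF1 Ho Hl Hc Ha E. apply NNPP. intros Hne.
  apply NF1. exists f, g. repeat split; auto.
  exists c, a. auto.
Qed.

Lemma not_fold_cond2_begrp f c :
  ~ fold_cond2 B -> gmem (egrp A (labe B f)) c ->
  in_conj_omega f (omega A (labe B f) c) -> begrp f c.
Proof.
  intros NF2 Hc Hom. repeat split; auto.
  apply NNPP. intros Hal. apply NF2. exists f. intros Hiff.
  apply Hal, (proj2 (Hiff c)). auto.
Qed.

Lemma folded_backtrack_lift f g b c :
  folded B -> bvgrp B (eterm f) b -> eorig g = eterm f ->
  labe B g = einv (labe B f) -> gmem (egrp A (labe B f)) c ->
  gmul (Agrp (eterm f)) (fomega f) (gmul (Agrp (eterm f)) b (falpha B g))
    = omega A (labe B f) c ->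
  g = einv f /\ begrp f c /\ b = bomega f c.
Proof.
  intros [NF1 NF2] Hb Hog Hl Hc E.
  set (G := Agrp (eterm f)) in *.
  assert (HbG : gmem G b) by now apply bvgrp_mem.
  assert (Hg : gmem G (falpha B g)) by now apply falpha_mem_eterm.
  assert (Hf : gmem G (fomega f)) by apply fomega_mem.
  assert (Hw : gmem G (omega A (labe B f) c)) by now apply omega_mem.
  apply gmul_eq_l in E; auto using gmem_mul.
  pose proof (ginv_fomega f) as Hinv. fold G in Hinv. rewrite Hinv in E.
  assert (Hgf : g = einv f).
  { apply not_fold_cond1_edge_eq with (a := ginv G b) (c := c); auto.
    - now rewrite lab_inv.
    - now rewrite lab_inv, egrp_inv.
    - apply (bvgrp_sub (eterm f)), Hb.
    - rewrite lab_inv. change (Agrp (eorig (einv f))) with G.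
      apply gmul_eq_l in E; auto. }
  subst g. rewrite <- Hinv in E, Hg.
  split; [reflexivity | split].
  - apply not_fold_cond2_begrp; auto. exists b. split; [exact Hb |].
    symmetry in E. apply gmul_eq_l in E; auto.
    now rewrite ginvK in E.
  - apply gmul_eq_r in E; auto.
    rewrite E, ginvK by auto. unfold bomega. fold G.
    symmetry. apply gmulA; auto using gmem_inv.
Qed.

Lemma mu_rest_path u s :
  path_from (@einv _) (@eorig _) (bvgrp B) u s ->
  path_from (@einv _) (@eorig _) (fun v x => gmem (vgrp A v) x)
    (labv B u) (mu_rest B s).
Proof.
  revert u. induction s as [|[f b] s IH]; intros u Hp; simpl; auto.
  destruct Hp as [Ho [Hb Hp]].
  fold (eterm f) in Hb, Hp. fold (eterm (labe B f)).
  rewrite <- Ho, lab_orig, <- labv_eterm.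
  split; [reflexivity | split; [| now apply IH]].
  destruct s as [|[g b'] s]; apply (@gmem_mul _ (Agrp (eterm f))); try apply fomega_mem.
  - now apply bvgrp_mem.
  - apply gmem_mul; [now apply bvgrp_mem | apply falpha_mem_eterm, Hp].
Qed.

Lemma mu_rest_no_backtrack u s :
  folded B ->
  path_from (@einv _) (@eorig _) (bvgrp B) u s ->
  ~ has_backtrack (@einv _) (@begrp _ _ B) (@bomega _ _ B) s ->
  ~ has_backtrack (@einv _) (fun e x => gmem (egrp A e) x) (omega A) (mu_rest B s).
Proof.
  intros Hfold. revert u.
  induction s as [|[f b] [|[g b'] s] IH]; intros u Hp Hn; simpl; auto.
  destruct Hp as [_ [Hb Hp]].
  intros [[Hl [c [Hc E]]] | R].
  - destruct (folded_backtrack_lift f g b c Hfold Hb (proj1 Hp) Hl Hc E) as [-> [Hfc ->]].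
    apply Hn. left. split; [reflexivity | now exists c].
  - apply (IH _ Hp); [intros R'; apply Hn; now right | exact R].
Qed.

Lemma mu_head_mem u b0 s :
  is_path (@einv _) (@eorig _) (bvgrp B) u b0 s ->
  gmem (vgrp A (labv B u)) (mu_head B u b0 s).
Proof.
  intros [Hb0 Hp]. destruct s as [|[f b] s]; simpl; [now apply bvgrp_mem |].
  destruct Hp as [Ho _]. subst u.
  apply gmem_mul; [now apply bvgrp_mem | apply falpha_mem].
Qed.

End AgraphFacts.

Theorem mainTheorem6 (T : Type) (A : graph_of_groups T) (B : Agraph A)
  (u0 : vert (bgraph B)) (b0 : T) (s : list (edge (bgraph B) * T)) :
  folded B ->
  B_reduced B u0 b0 s ->
  A_reduced A (labv B u0) (mu_head B u0 b0 s) (mu_rest B s).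
Proof.
  intros Hfold [Hpath Hn]. split; [split |].
  - now apply mu_head_mem.
  - apply mu_rest_path, Hpath.
  - apply mu_rest_no_backtrack with (u := u0); [exact Hfold | apply Hpath | exact Hn].
Qed.
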